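(* Let $\Phi$ be an irreducible crystallographic root system with simple system $S$ and positive system $\Phi^+$, let $k$ be a positive integer, and let $\mathcal{I}=(I_1,\ldots,I_k)$ be a geometric chain of $k$ ideals in the root poset of $\Phi$, with $\underline{\mathcal{I}}=(\underline{I}_1,\ldots,\underline{I}_{k+1})$ defined by $\underline{I}_i=I_i$ for $i\le k$ and $\underline{I}_{k+1}=\bigcup_{i+j=k+1}((I_i+I_j)\cap\Phi^+)\cup I_k\cup S$. Let $\mathsf{supp}(\mathcal{I})=I_k\cap S$. If $\alpha\in\Phi^+$ is a nonnegative integer linear combination of elements of $\mathsf{supp}(\mathcal{I})$, then $r_\alpha(\underline{\mathcal{I}})=r_\alpha(\mathcal{I})$. In particular, if $\alpha\in\Phi^+$ satisfies $r_\alpha(\underline{\mathcal{I}})\le k$, then $r_\alpha(\underline{\mathcal{I}})=r_\alpha(\mathcal{I})$.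
   Context: The root poset is $\Phi^+$ with $\alpha\le\beta$ iff $\beta-\alpha$ is a nonnegative integer combination of $S$; ideals are down-closed subsets. Sumsets: $A+B=\{a+b\mid a\in A,b\in B\}$. An ascending chain $I_1\subseteq\cdots\subseteq I_K$ of ideals, with $J_i=\Phi^+\setminus I_i$, is geometric if $(I_i+I_j)\cap\Phi^+\subseteq I_{i+j}$ for all $i,j\in\{0,\ldots,K\}$ with $i+j\le K$, and $(J_i+J_j)\cap\Phi^+\subseteq J_{i+j}$ for all $i,j\in\{0,\ldots,K\}$, where $I_0=\varnothing$, $J_0=\Phi^+$, $J_i=J_K$ for $i>K$. (In the definition of $\underline{I}_{k+1}$, $i,j\in\{0,\ldots,k\}$.) For a chain $\mathcal{I}=(I_1,\ldots,I_K)$ and $\alpha\in\Phi^+$, $r_\alpha(\mathcal{I})=\min\{r_1+\cdots+r_m\mid\alpha=\alpha_1+\cdots+\alpha_m,\ \alpha_i\in I_{r_i},\ r_i\in\{1,\ldots,K\}\}$, with $r_\alpha(\mathcal{I})=\infty$ if no such decomposition exists. *)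

From HB Require Import structures.
From mathcomp Require Import all_boot all_order all_algebra.
From mathcomp Require Import boolp reals.
Set Implicit Arguments. Unset Strict Implicit. Unset Printing Implicit Defensive.
Import Order.TTheory GRing.Theory Num.Theory.
Local Open Scope ring_scope.

Definition dotv (R : realType) (n : nat) (u v : 'rV[R]_n) : R := (u *m v^T) 0 0.

Definition root_system (R : realType) (n : nat) (Phi : seq 'rV[R]_n) : Prop :=
  (forall v : 'rV[R]_n, exists c : 'rV[R]_n -> R, v = \sum_(a <- Phi) c a *: a) /\
  (0 \notin Phi) /\
  (forall a b, a \in Phi -> b \in Phi ->
     b - ((2 * dotv b a / dotv a a) *: a) \in Phi) /\
  (forall a b, a \in Phi -> b \in Phi ->
     exists z : int, 2 * dotv b a / dotv a a = z%:~R) /\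
  (forall a (c : R), a \in Phi -> c *: a \in Phi -> c = 1 \/ c = -1).

Definition irreducible (R : realType) (n : nat) (Phi : seq 'rV[R]_n) : Prop :=
  Phi != [::] /\
  forall P : 'rV[R]_n -> Prop,
    (forall a b, a \in Phi -> b \in Phi -> P a -> ~ P b -> dotv a b = 0) ->
    (forall a, a \in Phi -> P a) \/ (forall a, a \in Phi -> ~ P a).

Definition simple_system (R : realType) (n : nat) (Phi S : seq 'rV[R]_n) : Prop :=
  uniq S /\ {subset S <= Phi} /\
  (forall c : 'rV[R]_n -> R, \sum_(s <- S) c s *: s = 0 ->
     forall s, s \in S -> c s = 0) /\
  (forall b, b \in Phi -> exists c : 'rV[R]_n -> int,
     b = \sum_(s <- S) (c s)%:~R *: s /\
     ((forall s, s \in S -> (0 <= c s)%R) \/ (forall s, s \in S -> (c s <= 0)%R))).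

Definition nncomb (R : realType) (n : nat) (S : seq 'rV[R]_n) (v : 'rV[R]_n) : Prop :=
  exists c : 'rV[R]_n -> nat, v = \sum_(s <- S) (c s)%:R *: s.

Definition pos_root (R : realType) (n : nat) (Phi S : seq 'rV[R]_n) (a : 'rV[R]_n) : Prop :=
  a \in Phi /\ nncomb S a.

Definition root_le (R : realType) (n : nat) (S : seq 'rV[R]_n) (a b : 'rV[R]_n) : Prop :=
  nncomb S (b - a).

Definition is_ideal (R : realType) (n : nat) (Phi S : seq 'rV[R]_n)
    (I : 'rV[R]_n -> Prop) : Prop :=
  (forall a, I a -> pos_root Phi S a) /\
  (forall a b, pos_root Phi S a -> pos_root Phi S b -> root_le S a b -> I b -> I a).

(* A chain (I_1, ..., I_K) is encoded as I : nat -> set of vectors, of which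
   only the indices 1..K matter.  Convention I_0 = empty: *)
Definition Iext (R : realType) (n : nat) (I : nat -> 'rV[R]_n -> Prop)
    (i : nat) (a : 'rV[R]_n) : Prop :=
  i <> 0%N /\ I i a.

(* J_i = Phi^+ \ I_i, with J_0 = Phi^+ and J_i = J_K for i > K *)
Definition Jc (R : realType) (n : nat) (Phi S : seq 'rV[R]_n)
    (I : nat -> 'rV[R]_n -> Prop) (K i : nat) (a : 'rV[R]_n) : Prop :=
  pos_root Phi S a /\ ~ Iext I (minn i K) a.

Definition geometric_chain (R : realType) (n : nat) (Phi S : seq 'rV[R]_n)
    (I : nat -> 'rV[R]_n -> Prop) (K : nat) : Prop :=
  (forall i, (1 <= i <= K)%N -> is_ideal Phi S (I i)) /\
  (forall i, (1 <= i < K)%N -> forall a, I i a -> I i.+1 a) /\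
  (forall i j a b, (i + j <= K)%N -> Iext I i a -> Iext I j b ->
     pos_root Phi S (a + b) -> Iext I (i + j) (a + b)) /\
  (forall i j a b, (i <= K)%N -> (j <= K)%N -> Jc Phi S I K i a -> Jc Phi S I K j b ->
     pos_root Phi S (a + b) -> Jc Phi S I K (i + j) (a + b)).

Definition Iunder (R : realType) (n : nat) (Phi S : seq 'rV[R]_n)
    (I : nat -> 'rV[R]_n -> Prop) (k i : nat) (a : 'rV[R]_n) : Prop :=
  if (i <= k)%N then I i a
  else if i == k.+1 then
    (exists i0 j0 b c, [/\ (1 <= i0 <= k)%N, (1 <= j0 <= k)%N, (i0 + j0 = k.+1)%N,
        I i0 b /\ I j0 c & a = b + c /\ pos_root Phi S a])
    \/ I k a \/ a \in S
  else False.

Definition rdec (R : realType) (n : nat) (I : nat -> 'rV[R]_n -> Prop) (K : nat)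
    (a : 'rV[R]_n) (m0 : nat) : Prop :=
  exists d : seq ('rV[R]_n * nat),
    [/\ a = \sum_(p <- d) p.1,
        (forall p, p \in d -> (1 <= p.2 <= K)%N /\ I p.2 p.1)
      & (\sum_(p <- d) p.2)%N = m0].

(* r_a(I): Some (minimum) or None (= infinity) *)
Definition rval (R : realType) (n : nat) (I : nat -> 'rV[R]_n -> Prop) (K : nat)
    (a : 'rV[R]_n) : option nat :=
  match pselect (exists m0, rdec I K a m0) with
  | left H =>
      Some (@ex_minn (fun m0 => `[< rdec I K a m0 >])
              (let: ex_intro m0 Hm := H in
               ex_intro (fun m1 => `[< rdec I K a m1 >]) m0 (asboolT Hm)))
  | right _ => None
  end.

(* Every part of an underline-I-decomposition of level k+1 is a sum of two
   parts of levels adding up to k+1, a root of I_k, or a simple root; when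
   alpha is supported on I_k \cap S, a simple part s occurs in alpha with
   nonzero coefficient (the other parts being nonnegative combinations of S),
   hence lies in I_k.  Refining each part therefore turns any
   underline-I-decomposition into an I-decomposition of no larger total
   level.  If r_alpha(underline I) <= k, a minimal decomposition only uses
   levels <= k and is already an I-decomposition. *)
From HB Require Import structures.
From mathcomp Require Import all_boot all_order all_algebra.
From mathcomp Require Import boolp reals.
Import Order.TTheory GRing.Theory Num.Theory.
Local Open Scope ring_scope.
Set Implicit Arguments. Unset Strict Implicit.

Section Rval.
Variables (R : realType) (n : nat).
Implicit Types (X Y : nat -> 'rV[R]_n -> Prop) (a x : 'rV[R]_n).

Lemma rval_Some X K a m : rval X K a = Some m ->
  rdec X K a m /\ forall m', rdec X K a m' -> (m <= m')%N.
Proof.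
rewrite /rval; case: pselect => // Hex; case: ex_minnP => m0 /asboolP Hm0 Hmin [<-].
by split=> // m' Hm'; apply/Hmin/asboolP.
Qed.

Lemma rval_None X K a : rval X K a = None -> forall m, ~ rdec X K a m.
Proof. by rewrite /rval; case: pselect => // Hn _ m Hm; apply: Hn; exists m. Qed.

Lemma rval_eq_of_dominated X Y K1 K2 a :
  (forall m, rdec X K1 a m -> exists2 m', rdec Y K2 a m' & (m' <= m)%N) ->
  (forall m, rdec Y K2 a m -> exists2 m', rdec X K1 a m' & (m' <= m)%N) ->
  rval X K1 a = rval Y K2 a.
Proof.
move=> HXY HYX.
case EX: (rval X K1 a) => [mX|]; case EY: (rval Y K2 a) => [mY|] //.
- have [HdX minX] := rval_Some EX; have [HdY minY] := rval_Some EY.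
  have [mY' /minY leY leYX] := HXY _ HdX; have [mX' /minX leX leXY] := HYX _ HdY.
  by congr Some; apply/eqP; rewrite eqn_leq (leq_trans leX leXY) (leq_trans leY leYX).
- by have [m' Hm' _] := HXY _ (rval_Some EX).1; case: (rval_None EY Hm').
- by have [m' Hm' _] := HYX _ (rval_Some EY).1; case: (rval_None EX Hm').
Qed.

Lemma rdec0 X K : rdec X K 0 0.
Proof. by exists [::]; rewrite !big_nil. Qed.

Lemma rdec1 X K i x : (1 <= i <= K)%N -> X i x -> rdec X K x i.
Proof.
move=> Hi Hx; exists [:: (x, i)]; rewrite !big_seq1.
by split=> // p; rewrite mem_seq1 => /eqP ->.
Qed.

Lemma rdecD X K a b ma mb :
  rdec X K a ma -> rdec X K b mb -> rdec X K (a + b) (ma + mb).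
Proof.
move=> [da [-> Hda <-]] [db [-> Hdb <-]]; exists (da ++ db).
by rewrite !big_cat; split=> // p; rewrite mem_cat => /orP[/Hda|/Hdb].
Qed.

Lemma rdec_mono X Y K1 K2 a m :
  (forall i x, (1 <= i <= K1)%N -> X i x -> (1 <= i <= K2)%N /\ Y i x) ->
  rdec X K1 a m -> rdec Y K2 a m.
Proof. by move=> XY [d [Ha Hd Hm]]; exists d; split=> // p /Hd[]; apply: XY. Qed.

Lemma rdec_refine X Y K1 K2 a m :
  (forall i x, (1 <= i <= K1)%N -> X i x -> exists2 m', rdec Y K2 x m' & (m' <= i)%N) ->
  rdec X K1 a m -> exists2 m', rdec Y K2 a m' & (m' <= m)%N.
Proof.
move=> refine [d [-> Hd <-]]; elim: d Hd => [|p d IH] Hd.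
  by exists 0%N; rewrite ?big_nil //; apply: rdec0.
have [Hp Hpx] := Hd p (mem_head p d).
have [mp Hmp lep] := refine _ _ Hp Hpx.
have [md Hmd led] := IH (fun q Hq => Hd q (mem_behead (s := p :: d) Hq)).
by exists (mp + md)%N; rewrite ?big_cons ?leq_add //; apply: rdecD.
Qed.

End Rval.

Section SimpleCoefficients.
Variables (R : realType) (n : nat) (S : seq 'rV[R]_n).
Hypothesis uniqS : uniq S.
Hypothesis freeS : forall c : 'rV[R]_n -> R, \sum_(s <- S) c s *: s = 0 ->
  forall s, s \in S -> c s = 0.

Lemma nncomb_sum (d : seq ('rV[R]_n * nat)) :
  (forall p, p \in d -> nncomb S p.1) -> nncomb S (\sum_(p <- d) p.1).
Proof.
move=> Hd; rewrite big_seq; apply: big_ind => [|x y [cx ->] [cy ->]|p /Hd] //.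
  by exists (fun _ => 0%N); rewrite big1 // => s _; rewrite scale0r.
exists (fun s => cx s + cy s)%N; rewrite -big_split /=.
by apply: eq_bigr => s _; rewrite natrD scalerDl.
Qed.

Lemma sum_indicator s : s \in S -> \sum_(t <- S) (t == s)%:R *: t = s.
Proof.
move=> sS; rewrite (bigD1_seq s) //= eqxx scale1r big1 ?addr0 //.
by move=> t /negbTE ->; rewrite scale0r.
Qed.

Lemma nncomb_simple s : s \in S -> nncomb S s.
Proof. by move=> sS; exists (fun t => (t == s)%N); rewrite sum_indicator. Qed.

(* By freeness of S, c s = 1 + e s. *)
Lemma nncomb_coef_neq0 s (c e : 'rV[R]_n -> nat) : s \in S ->
  \sum_(t <- S) (c t)%:R *: t = s + \sum_(t <- S) (e t)%:R *: t -> c s <> 0%N.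
Proof.
move=> sS Hc cs0.
pose f t : R := (c t)%:R - (e t)%:R - (t == s)%:R.
have : \sum_(t <- S) f t *: t = 0.
  under eq_bigr do rewrite !scalerBl.
  by rewrite !sumrB sum_indicator // Hc addrK subrr.
move=> /freeS /(_ s sS) /eqP; rewrite /f eqxx cs0 sub0r -opprD oppr_eq0.
by rewrite natr1 pnatr_eq0.
Qed.

End SimpleCoefficients.

Section ExtendedChain.
Variables (R : realType) (n : nat) (Phi S : seq 'rV[R]_n) (k : nat).
Variable I : nat -> 'rV[R]_n -> Prop.
Hypothesis k_gt0 : (0 < k)%N.
Hypothesis idealI : forall i, (1 <= i <= k)%N -> is_ideal Phi S (I i).
Hypothesis uniqS : uniq S.
Hypothesis freeS : forall c : 'rV[R]_n -> R, \sum_(s <- S) c s *: s = 0 ->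
  forall s, s \in S -> c s = 0.

Let Iu := Iunder Phi S I k.

Lemma Iunder_le i x : (i <= k)%N -> Iu i x = I i x.
Proof. by rewrite /Iu /Iunder => ->. Qed.

Lemma rdec_Iunder a m : rdec I k a m -> rdec Iu k.+1 a m.
Proof.
apply: rdec_mono => i x /andP[i1 ik] Hx.
by rewrite i1 (leq_trans ik) // Iunder_le.
Qed.

Lemma Iunder_nncomb i x : (1 <= i <= k.+1)%N -> Iu i x -> nncomb S x.
Proof.
have I_nncomb j y : (1 <= j <= k)%N -> I j y -> nncomb S y.
  by move=> Hj /((idealI Hj).1) [].
move=> /andP[i1]; rewrite leq_eqVlt ltnS => /orP[/eqP->|ik].
  rewrite /Iu /Iunder ltnn eqxx.
  case=> [[i0 [j0 [b [c [_ _ _ _ [_ []]]]]]]|[]] // Hx.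
    by apply: I_nncomb Hx; rewrite k_gt0 leqnn.
  exact: nncomb_simple.
by rewrite Iunder_le //; apply: I_nncomb; rewrite i1.
Qed.

Lemma Iunder_refine i x : (1 <= i <= k.+1)%N -> Iu i x -> (x \in S -> I k x) ->
  exists2 m, rdec I k x m & (m <= i)%N.
Proof.
move=> /andP[i1]; rewrite leq_eqVlt ltnS => /orP[/eqP->|ik]; last first.
  by rewrite Iunder_le // => Hx _; exists i => //; apply: rdec1; rewrite ?i1.
have Ik : (1 <= k <= k)%N by rewrite k_gt0 leqnn.
rewrite /Iu /Iunder ltnn eqxx.
case=> [[i0 [j0 [b [c [Hi0 Hj0 <- [Hb Hc] [-> _]]]]]]|[Hx|Sx]] IkS.
- by exists (i0 + j0)%N => //; apply: rdecD; apply: rdec1.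
- by exists k; rewrite ?leqnSn //; apply: rdec1.
- by exists k; rewrite ?leqnSn //; apply: rdec1 => //; apply: IkS.
Qed.

Lemma rdec_Iunder_supported a (c : 'rV[R]_n -> nat) m :
  a = \sum_(s <- S) (c s)%:R *: s -> (forall s, s \in S -> c s <> 0%N -> I k s) ->
  rdec Iu k.+1 a m -> exists2 m', rdec I k a m' & (m' <= m)%N.
Proof.
move=> Ha suppI [d [Hsum Hd Hm]].
apply: (@rdec_refine _ _ (fun i x => Iu i x /\ (x \in S -> I k x)) _ k.+1).
  by move=> i x Hi []; apply: Iunder_refine.
exists d; split=> // p Hp; have [Hp2 Hp1] := Hd p Hp.
split=> //; split=> // Sp.
have [e He] : nncomb S (\sum_(q <- rem p d) q.1).
  by apply: nncomb_sum => q /mem_rem /Hd [Hq2 Hq1]; apply: Iunder_nncomb Hq1.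
apply: suppI => //; apply: (nncomb_coef_neq0 uniqS freeS (e := e)) => //.
by rewrite -Ha -He Hsum (perm_big _ (perm_to_rem Hp)) big_cons.
Qed.

(* The level of each part is bounded by the total level m. *)
Lemma rdec_Iunder_small a m : (m <= k)%N -> rdec Iu k.+1 a m -> rdec I k a m.
Proof.
move=> mk [d [Ha Hd Hm]]; exists d; split=> // p Hp.
have pk : (p.2 <= k)%N.
  by rewrite (leq_trans _ mk) // -Hm (perm_big _ (perm_to_rem Hp)) big_cons leq_addr.
by have [/andP[p1 _]] := Hd p Hp; rewrite Iunder_le // p1 pk.
Qed.

End ExtendedChain.

Unset Implicit Arguments.
Theorem lemma10 (R : realType) (n : nat) (Phi S : seq 'rV[R]_n) (k : nat)
    (I : nat -> 'rV[R]_n -> Prop) :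
  root_system Phi -> irreducible Phi -> simple_system Phi S ->
  (0 < k)%N -> geometric_chain Phi S I k ->
  (forall a, pos_root Phi S a ->
     (exists c : 'rV[R]_n -> nat, a = \sum_(s <- S) (c s)%:R *: s /\
        (forall s, s \in S -> c s <> 0%N -> I k s)) ->
     rval (Iunder Phi S I k) k.+1 a = rval I k a) /\
  (forall a, pos_root Phi S a ->
     (exists m, rval (Iunder Phi S I k) k.+1 a = Some m /\ (m <= k)%N) ->
     rval (Iunder Phi S I k) k.+1 a = rval I k a).
Proof.
move=> _ _ [uniqS [_ [freeS _]]] k_gt0 [idealI _].
split=> a _.
  move=> [c [Ha suppI]]; apply: rval_eq_of_dominated => m Hm.
    exact: (rdec_Iunder_supported k_gt0 idealI uniqS freeS Ha suppI Hm).
  by exists m => //; apply: rdec_Iunder.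
move=> [m [Hr mk]]; have [Hm minm] := rval_Some Hr.
have HmI := rdec_Iunder_small mk Hm.
apply: rval_eq_of_dominated => m' Hm'; first by exists m => //; apply: minm.
by exists m' => //; apply: rdec_Iunder.
Qed.
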